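(* Let $(\mathcal{D}_1,\mathcal{D}_2,\dots)$ be a data stream for which at least one $f\in\mathcal{F}$ is consistent with every $\mathcal{D}_t$. Then: (i) $\mathsf{P}(\mathcal{D}_t)\supseteq\mathsf{P}(\mathcal{D}_{t+1})$ for all $t$; (ii) $\mathsf{P}(\mathcal{D}_\infty):=\left(\bigcap_{k=1}^\infty\mathsf{P}(\mathcal{D}_k)\right)\cap\mathsf{K}$ is non-empty; (iii) if $\theta_t\in\mathsf{P}(\mathcal{D}_t)$ for all $t$ and $\lim_{t\to\infty}\theta_t=\theta_\infty$, then $\theta_\infty\in\mathsf{P}(\mathcal{D}_\infty)$.
   Context: $\mathcal{F}$ is a set of functions $\mathbb{N}\times\mathcal{X}\times\mathcal{U}\to\mathcal{X}$ with compact parametrization $(\mathbb{T},\mathsf{K},d)$: $(\mathsf{K},d)$ compact metric space, $\mathbb{T}:\mathsf{K}\to2^{\mathcal{F}}$, $\mathcal{F}\subseteq\bigcup_\theta\mathbb{T}[\theta]$. A data stream is a sequence $\mathcal{D}_t=(d_1,\dots,d_t)$ of data sets formed from observations $d_i=(t_i,x^+_i,x_i,u_i)$; $f$ is consistent with $\mathcal{D}$ if $x^+=f(t,x,u)$ for all $(t,x^+,x,u)\in\mathcal{D}$. $\mathsf{P}(\mathcal{D})$ is the closure of $\{\theta\in\mathsf{K}:\exists f\in\mathbb{T}[\theta]\text{ consistent with }\mathcal{D}\}$. *)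

From HB Require Import structures.
From mathcomp Require Import all_boot all_order all_algebra.
From mathcomp Require Import all_classical all_reals all_analysis.
Set Implicit Arguments. Unset Strict Implicit. Unset Printing Implicit Defensive.
Import Order.TTheory GRing.Theory Num.Theory.
Local Open Scope classical_set_scope.

Record obs (X U : Type) := Obs { ob_t : nat; ob_xp : X; ob_x : X; ob_u : U }.

Definition consistent (X U : Type) (f : nat -> X -> U -> X) (D : set (obs X U)) :=
  forall o, D o -> ob_xp o = f (ob_t o) (ob_x o) (ob_u o).

(* The data set D_t = (d_1, ..., d_t) of a data stream d (d 0 is unused;
   the stream is indexed from 1, as in the paper). *)
Definition data_set (X U : Type) (d : nat -> obs X U) (t : nat) : set (obs X U) :=
  [set o | exists2 i : nat, (0 < i <= t)%N & o = d i].

Definition Pset (K : topologicalType) (X U : Type)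
  (T : K -> set (nat -> X -> U -> X)) (D : set (obs X U)) : set K :=
  closure [set th | exists2 f, T th f & consistent f D].

From HB Require Import structures.
From mathcomp Require Import all_boot all_order all_algebra.
From mathcomp Require Import all_classical all_reals all_analysis.
Import Order.TTheory GRing.Theory Num.Theory.
Local Open Scope classical_set_scope.

(* Larger data sets admit fewer consistent functions, so the sets P(D_t) shrink;
   a parameter of a function consistent with the whole stream lies in all of
   them; and the P(D_t) are closed, so a limit of points eventually in P(D_k)
   stays in P(D_k). *)

Lemma data_set_le {X U : Type} (d : nat -> obs X U) {k t : nat} :
  (k <= t)%N -> data_set d k `<=` data_set d t.
Proof.
by move=> kt o [i /andP[i0 ik] ->]; exists i; rewrite ?i0 ?(leq_trans ik kt).
Qed.

Lemma consistentS {X U : Type} (f : nat -> X -> U -> X) {D D' : set (obs X U)} :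
  D `<=` D' -> consistent f D' -> consistent f D.
Proof. by move=> DD' fD' o /DD'; apply: fD'. Qed.

Section Pset.
Context {K : topologicalType} {X U : Type} (T : K -> set (nat -> X -> U -> X)).

Lemma PsetS {D D' : set (obs X U)} : D `<=` D' -> Pset T D' `<=` Pset T D.
Proof.
move=> DD'; apply: closureS => th [f Tf fD'].
by exists f => //; apply: consistentS fD'.
Qed.

Lemma closed_Pset (D : set (obs X U)) : closed (Pset T D).
Proof. exact: closed_closure. Qed.

Lemma Pset_consistent {D : set (obs X U)} {th f} :
  T th f -> consistent f D -> Pset T D th.
Proof. by move=> Tf fD; apply: subset_closure; exists f. Qed.

Lemma Pset_data_set_le (d : nat -> obs X U) {k t : nat} :
  (k <= t)%N -> Pset T (data_set d t) `<=` Pset T (data_set d k).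
Proof. by move=> kt; apply/PsetS/data_set_le. Qed.

End Pset.

Theorem mainTheorem13 (R : realType) (K : metricType R) (X U : Type)
  (F : set (nat -> X -> U -> X)) (T : K -> set (nat -> X -> U -> X))
  (K_compact : compact [set: K])
  (T_in_F : forall th, T th `<=` F)
  (F_cover : F `<=` \bigcup_(th in [set: K]) T th)
  (d : nat -> obs X U)
  (Hcons : exists2 f, F f & forall t, (0 < t)%N -> consistent f (data_set d t)) :
  (forall t, (0 < t)%N -> Pset T (data_set d t.+1) `<=` Pset T (data_set d t)) /\
  (\bigcap_(k in [set k : nat | (0 < k)%N]) Pset T (data_set d k) `&` [set: K]
     !=set0) /\
  (forall (th : nat -> K) (th_inf : K),
     (forall t, (0 < t)%N -> Pset T (data_set d t) (th t)) ->
     th @ \oo --> th_inf ->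
     (\bigcap_(k in [set k : nat | (0 < k)%N]) Pset T (data_set d k) `&` [set: K])
       th_inf).
Proof.
split; first by move=> t _; apply: Pset_data_set_le.
split.
  have [f Ff f_cons] := Hcons; have [th _ Tf] := F_cover f Ff.
  by exists th; split=> // k k0; apply: Pset_consistent Tf (f_cons k k0).
move=> th th_inf th_P th_cvg; split=> // k k0.
apply: (closed_cvg _ (closed_Pset T (data_set d k)) _ _ th_cvg).
exists k => // t /= kt.
by apply: (Pset_data_set_le T d kt); apply: th_P; apply: leq_trans kt.
Qed.
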